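(* Let $C$ be a finite group and $G$ a group whose commutator subgroup $[G,G]$ is $C$ and whose abelianization $G/C$ is free abelian of finite rank. If $N\lhd G$ is a normal subgroup with $N\cap C$ trivial, then $N$ is contained in the center of $G$. *)

(* Possibly infinite groups are not available in MathComp (fingroup is finite
   only), so an abstract group is given by an honest record of axioms. *)
From Stdlib Require List.
From mathcomp Require Import all_boot all_algebra.
Set Implicit Arguments. Unset Strict Implicit. Unset Printing Implicit Defensive.
Import GRing.Theory.
Local Open Scope ring_scope.

Record group := Group {
  gcarrier :> Type;
  gmul : gcarrier -> gcarrier -> gcarrier;
  gone : gcarrier;
  ginv : gcarrier -> gcarrier;
  gmulA : forall x y z, gmul x (gmul y z) = gmul (gmul x y) z;
  gmul1 : forall x, gmul gone x = x;
  gmulV : forall x, gmul (ginv x) x = gone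
}.

Section GroupDefs.
Variable G : group.
Local Notation "x * y" := (gmul x y).
Local Notation "1" := (gone G).
Local Notation "x ^-1" := (ginv x).

Definition gcomm (x y : G) : G := x^-1 * y^-1 * x * y.

Inductive generated (S : G -> Prop) : G -> Prop :=
| gen_base x : S x -> generated S x
| gen_one : generated S 1
| gen_mul x y : generated S x -> generated S y -> generated S (x * y)
| gen_inv x : generated S x -> generated S (x^-1).

Definition derived_subgroup : G -> Prop :=
  generated (fun z => exists x y, z = gcomm x y).

Definition is_subgroup (H : G -> Prop) : Prop :=
  H 1 /\ (forall x y, H x -> H y -> H (x * y)) /\ (forall x, H x -> H (x^-1)).

Definition is_normal_subgroup (N : G -> Prop) : Prop :=
  is_subgroup N /\ (forall g x, N x -> N (g^-1 * x * g)).

Definition finite_subset (H : G -> Prop) : Prop :=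
  exists s : seq G, forall x, H x -> List.In x s.

Definition center (x : G) : Prop := forall g : G, g * x = x * g.

(* G / C is free abelian of finite rank: for some n there is a surjective
   group homomorphism G -> Z^n (= 'rV[int]_n) whose kernel is exactly C,
   i.e. (first isomorphism theorem) G / C is isomorphic to Z^n. *)
Definition quotient_free_abelian_finite_rank (C : G -> Prop) : Prop :=
  exists (n : nat) (phi : G -> 'rV[int]_n),
    (forall x y, phi (x * y) = phi x + phi y) /\
    (forall v, exists x, phi x = v) /\
    (forall x, phi x = 0 <-> C x).

End GroupDefs.

From mathcomp Require Import all_boot all_algebra.

(* For x in N and g in G, the commutator [x, g] = x^-1 (g^-1 x g) lies in N by
   normality and in [G, G] by definition, so it is trivial and x commutes with g. *)

Section GroupFacts.
Variable G : group.
Local Notation "x * y" := (gmul x y).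
Local Notation "1" := (gone G).
Local Notation "x ^-1" := (ginv x).

Lemma gmulVr (x : G) : x * x^-1 = 1.
Proof.
rewrite -[x * x^-1]gmul1 -[in 1 * _](gmulV x^-1).
by rewrite -gmulA [x^-1 * (x * x^-1)]gmulA gmulV gmul1 gmulV.
Qed.

Lemma gmulr1 (x : G) : x * 1 = x.
Proof. by rewrite -(gmulV x) gmulA gmulVr gmul1. Qed.

Lemma gmulKV (x y : G) : x * (x^-1 * y) = y.
Proof. by rewrite gmulA gmulVr gmul1. Qed.

Lemma gcomm_conjE (x g : G) : gcomm x g = x^-1 * (g^-1 * x * g).
Proof. by rewrite /gcomm -!gmulA. Qed.

Lemma gcomm_eq1_commute (x g : G) : gcomm x g = 1 -> g * x = x * g.
Proof.
rewrite gcomm_conjE => xg1.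
have conj_x : g^-1 * x * g = x by rewrite -[LHS](gmulKV x) xg1 gmulr1.
by rewrite -{1}conj_x -gmulA gmulKV.
Qed.

Lemma normal_gcomm {N : G -> Prop} (x g : G) :
  is_normal_subgroup N -> N x -> N (gcomm x g).
Proof.
move=> [[_ [N_mul N_inv]] N_conj] Nx.
by rewrite gcomm_conjE; apply: N_mul; [apply: N_inv | apply: N_conj].
Qed.

Lemma derived_gcomm (x g : G) : derived_subgroup (gcomm x g).
Proof. by apply: gen_base; exists x, g. Qed.

Lemma normal_derived_trivI_center (N : G -> Prop) :
  is_normal_subgroup N ->
  (forall x, N x -> derived_subgroup x -> x = 1) ->
  forall x, N x -> center x.
Proof.
move=> N_normal N_derived1 x Nx g; apply: gcomm_eq1_commute.
exact: N_derived1 _ (normal_gcomm x g N_normal Nx) (derived_gcomm x g).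
Qed.

End GroupFacts.

Theorem proposition11 (G : group) (C : G -> Prop) :
  is_subgroup C ->
  finite_subset C ->
  (forall x, C x <-> derived_subgroup x) ->
  quotient_free_abelian_finite_rank C ->
  forall N : G -> Prop,
    is_normal_subgroup N ->
    (forall x, N x -> C x -> x = gone G) ->
    forall x, N x -> center x.
Proof.
move=> _ _ C_derived _ N N_normal NC1.
apply: normal_derived_trivI_center N_normal _ => x Nx /C_derived.
exact: NC1.
Qed.
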